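(* Assume the standing setup below. Let $x\in X$ (so $x\ne y$) and let $s\le t$ be phase change numbers of $X$ with $s_1\le s$. Suppose that $[x]_{s,Y}=[x]_{t,Y}$ (i.e. $(s,[x]_{s,Y})\to(t,[x]_{t,Y})$ is a partial layer of $Y$) and that $y\in[x]_{s,Y}$. Then $[x]_{s,X}=[x]_{t,X}$, i.e. $(s,[x]_{s,X})\to(t,[x]_{t,X})$ is a partial layer of $X$.
   Context: For a finite set $Z\subset\mathbb{R}^n$ and a real number $s\ge 0$, the Vietoris–Rips complex $V_s(Z)$ is the simplicial complex with vertex set $Z$ whose simplices are the nonempty subsets $\sigma\subseteq Z$ with $d(z,z')\le s$ for all $z,z'\in\sigma$ ($d$ the Euclidean distance). For $z\in Z$, $[z]_{s,Z}\subseteq Z$ denotes the set of vertices of the path component of $V_s(Z)$ containing $z$. A partial layer for $Z$ is a pair of parameters $s\le t$ and $z\in Z$ (written as an edge $(s,[z]_{s,Z})\to(t,[z]_{t,Z})$) with $[z]_{s,Z}=[z]_{t,Z}$ as subsets of $Z$. Standing setup: $X\subset\mathbb{R}^n$ is a finite set with at least two points, $y\in\mathbb{R}^n\setminus X$, $Y=X\sqcup\{y\}$. The phase change numbers of $X$ are the distinct values $0=s_0<s_1<\dots<s_k$ of $d(x,x')$ for $x,x'\in X$. There are $x_0\in X$ and a real $r>0$ with $d(y,x_0)<r$ and $r<s_{i+1}-s_i$ for all $0\le i<k$. *)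

From Stdlib Require Import Reals Lra List Relations.
Import ListNotations.
Open Scope R_scope.

(* A point of R^n is a list of reals of length n. *)
Definition point := list R.

(* Euclidean distance (on points of equal length). *)
Definition edist (p q : point) : R :=
  sqrt (fold_right Rplus 0 (map (fun ab => (fst ab - snd ab) ^ 2) (combine p q))).

Definition finite_set_in (n : nat) (Z : list point) : Prop :=
  NoDup Z /\ Forall (fun p => length p = n) Z.

(* Edge of the 1-skeleton of the Vietoris-Rips complex V_s(Z). *)
Definition vr_edge (s : R) (Z : list point) (a b : point) : Prop :=
  In a Z /\ In b Z /\ edist a b <= s.

(* [z]_{s,Z}: vertex set of the path component of V_s(Z) containing z
   (as a predicate on points). *)
Definition vr_comp (s : R) (Z : list point) (z : point) (w : point) : Prop :=
  In w Z /\ clos_refl_trans point (vr_edge s Z) z w.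

Definition same_set (A B : point -> Prop) : Prop := forall w, A w <-> B w.

Definition is_pcn (X : list point) (a : R) : Prop :=
  exists x x', In x X /\ In x' X /\ a = edist x x'.

Definition gap_bound (X : list point) (r : R) : Prop :=
  forall a b, is_pcn X a -> is_pcn X b -> a < b ->
    (forall c, is_pcn X c -> ~ (a < c /\ c < b)) -> r < b - a.

Definition is_s1 (X : list point) (s1 : R) : Prop :=
  is_pcn X s1 /\ 0 < s1 /\ (forall c, is_pcn X c -> 0 < c -> s1 <= c).

From Stdlib Require Import Reals List.
From Stdlib Require Import Lra Psatz Relations.
Open Scope R_scope.

(* Put Y = y :: X.  Because d(y,x0) < r and r is smaller than
   every gap between consecutive phase change numbers of X, the extra point y
   can be retracted onto x0: the map sending y to x0 and fixing X sends every
   edge of V_s(Y) to an edge or a vertex of V_s(X).  Indeed, if d(y,c) <= s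
   then d(x0,c) < s + r by the triangle inequality, and a phase change number
   below s + r cannot exceed the phase change number s.  Consequently a path of
   V_s(Y) between two points of X projects to a path of V_s(X).  Now if
   w is in [x]_{t,X} then w is in [x]_{t,Y} = [x]_{s,Y}, hence in [x]_{s,X};
   the other inclusion is monotonicity of components in the scale. *)

Lemma sqrt_sum_squares_triangle (x1 x2 y1 y2 : R) :
  sqrt ((x1 + x2) ^ 2 + (y1 + y2) ^ 2) <=
  sqrt (x1 ^ 2 + y1 ^ 2) + sqrt (x2 ^ 2 + y2 ^ 2).
Proof.
  set (A := x1 ^ 2 + y1 ^ 2); set (B := x2 ^ 2 + y2 ^ 2).
  assert (HA : 0 <= A) by (unfold A; nra).
  assert (HB : 0 <= B) by (unfold B; nra).
  pose proof (sqrt_pos A); pose proof (sqrt_pos B).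
  pose proof (sqrt_sqrt A HA) as EA; pose proof (sqrt_sqrt B HB) as EB.
  assert (Hcs : x1 * x2 + y1 * y2 <= sqrt A * sqrt B).
  { assert (Hsq : (x1 * x2 + y1 * y2) ^ 2 <= (sqrt A * sqrt B) ^ 2).
    { replace ((sqrt A * sqrt B) ^ 2) with ((sqrt A * sqrt A) * (sqrt B * sqrt B))
        by ring.
      rewrite EA, EB; unfold A, B; pose proof (pow2_ge_0 (x1 * y2 - x2 * y1)); nra. }
    assert (0 <= sqrt A * sqrt B) by nra.
    nra. }
  rewrite <- (sqrt_square (sqrt A + sqrt B)) by lra.
  apply sqrt_le_1_alt.
  replace ((sqrt A + sqrt B) * (sqrt A + sqrt B))
    with (sqrt A * sqrt A + sqrt B * sqrt B + 2 * (sqrt A * sqrt B)) by ring.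
  rewrite EA, EB; unfold A, B in *; nra.
Qed.

Lemma edist_cons (a b : R) (p q : point) :
  edist (a :: p) (b :: q) = sqrt ((a - b) ^ 2 + edist p q ^ 2).
Proof.
  unfold edist at 2; rewrite pow2_sqrt; [reflexivity|].
  revert q; induction p as [|c p IH]; intros [|d q];
    cbn [combine map fold_right fst snd]; try lra.
  specialize (IH q); pose proof (pow2_ge_0 (c - d)); lra.
Qed.

Lemma edist_sym (p q : point) : edist p q = edist q p.
Proof.
  revert q; induction p as [|a p IH]; intros [|b q]; try reflexivity.
  rewrite !edist_cons, IH; f_equal; ring.
Qed.

Lemma edist_nonneg (p q : point) : 0 <= edist p q.
Proof. apply sqrt_pos. Qed.

Lemma edist_triangle (p q r : point) :
  length p = length q -> length q = length r ->
  edist p r <= edist p q + edist q r.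
Proof.
  revert q r; induction p as [|a p IH]; intros [|b q] [|c r] Hpq Hqr;
    try discriminate.
  - unfold edist; simpl; rewrite sqrt_0; lra.
  - injection Hpq as Hpq; injection Hqr as Hqr.
    pose proof (IH q r Hpq Hqr).
    pose proof (edist_nonneg p r); pose proof (edist_nonneg p q);
      pose proof (edist_nonneg q r).
    rewrite !edist_cons.
    eapply Rle_trans; [|apply (sqrt_sum_squares_triangle (a - b) (b - c))].
    apply sqrt_le_1_alt.
    replace (a - b + (b - c)) with (a - c) by ring.
    nra.
Qed.

Lemma least_above_or_bounded (l : list R) (s : R) :
  (forall c, In c l -> c <= s) \/
  exists m, In m l /\ s < m /\ forall c, In c l -> s < c -> m <= c.
Proof.
  induction l as [|a l [Hbelow | [m [Hm [Hsm Hleast]]]]].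
  - left; intros c [].
  - destruct (Rle_lt_dec a s) as [Has|Has].
    + left; intros c [<-|Hc]; auto.
    + right; exists a; split; [now left|]; split; [exact Has|].
      intros c [<-|Hc] Hsc; [lra|]; specialize (Hbelow c Hc); lra.
  - right; destruct (Rle_lt_dec a s) as [Has|Has].
    + exists m; split; [now right|]; split; [exact Hsm|].
      intros c [<-|Hc] Hsc; [lra|auto].
    + destruct (Rle_lt_dec a m) as [Ham|Ham].
      * exists a; split; [now left|]; split; [exact Has|].
        intros c [<-|Hc] Hsc; [lra|]; specialize (Hleast c Hc Hsc); lra.
      * exists m; split; [now right|]; split; [exact Hsm|].
        intros c [<-|Hc] Hsc; [lra|auto].
Qed.

Definition pcn_list (X : list point) : list R :=
  flat_map (fun p => map (edist p) X) X.

Lemma in_pcn_list (X : list point) (a : R) : In a (pcn_list X) <-> is_pcn X a.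
Proof.
  unfold pcn_list, is_pcn; rewrite in_flat_map; split.
  - intros [p [Hp Ha]]; apply in_map_iff in Ha as [q [<- Hq]]; eauto.
  - intros [p [q [Hp [Hq ->]]]]; exists p; split; [exact Hp|].
    apply in_map_iff; eauto.
Qed.

Lemma next_pcn (X : list point) (s a : R) :
  is_pcn X a -> s < a ->
  exists b, is_pcn X b /\ s < b /\ forall c, is_pcn X c -> s < c -> b <= c.
Proof.
  intros Ha Hsa.
  destruct (least_above_or_bounded (pcn_list X) s) as [Hbelow | [b [Hb [Hsb Hleast]]]].
  - apply in_pcn_list, Hbelow in Ha; lra.
  - exists b; repeat split; [now apply in_pcn_list | exact Hsb |].
    intros c Hc; apply Hleast, in_pcn_list, Hc.
Qed.

(* Gap lemma: a phase change number less than r above the phase change number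
   s is at most s, since the next one after s is more than r above it. *)
Lemma pcn_within_gap (X : list point) (r s a : R) :
  gap_bound X r -> is_pcn X s -> is_pcn X a -> a < s + r -> a <= s.
Proof.
  intros Hgap Hs Ha Har.
  destruct (Rle_lt_dec a s) as [|Hsa]; [assumption|exfalso].
  destruct (next_pcn X s a Ha Hsa) as [b [Hb [Hsb Hleast]]].
  assert (Hba : b <= a) by (apply Hleast; auto).
  assert (r < b - s).
  { apply Hgap; auto.
    intros c Hc [Hsc Hcb]; specialize (Hleast c Hc Hsc); lra. }
  lra.
Qed.

Lemma clos_rt_map (A B : Type) (R1 : relation A) (R2 : relation B) (f : A -> B) :
  (forall a b, R1 a b -> clos_refl_trans B R2 (f a) (f b)) ->
  forall u v, clos_refl_trans A R1 u v -> clos_refl_trans B R2 (f u) (f v).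
Proof.
  intros Hedge u v Huv; induction Huv as [a b Hab | a | a b c _ IHab _ IHbc].
  - now apply Hedge.
  - apply rt_refl.
  - eapply rt_trans; eauto.
Qed.

Lemma vr_comp_mono (s t : R) (Z Z' : list point) (z w : point) :
  s <= t -> incl Z Z' -> vr_comp s Z z w -> vr_comp t Z' z w.
Proof.
  intros Hst HZ [Hw Hzw]; split; [now apply HZ|].
  apply (clos_rt_map _ _ (vr_edge s Z) _ (fun p => p)); [|exact Hzw].
  intros a b [Ha [Hb Hab]]; apply rt_step; repeat split; auto; lra.
Qed.

Section Retraction.

Variables (n : nat) (X : list point) (y x0 : point) (r s : R).
Hypothesis X_dim : Forall (fun p => length p = n) X.
Hypothesis y_dim : length y = n.
Hypothesis y_notin_X : ~ In y X.
Hypothesis x0_in_X : In x0 X.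
Hypothesis y_near_x0 : edist y x0 < r.
Hypothesis X_gap : gap_bound X r.
Hypothesis s_pcn : is_pcn X s.

Definition retract (p : point) : point :=
  if list_eq_dec Req_dec_T p y then x0 else p.

Lemma retract_id (p : point) : In p X -> retract p = p.
Proof.
  intros Hp; unfold retract.
  destruct (list_eq_dec Req_dec_T p y) as [->|]; [contradiction|reflexivity].
Qed.

(* Every point of X within s of y is within s of x0: d(x0,c) < s + r and
   d(x0,c) is a phase change number, so the gap lemma applies. *)
Lemma near_y_near_x0 (c : point) :
  In c X -> edist y c <= s -> edist x0 c <= s.
Proof.
  intros Hc Hyc; rewrite Forall_forall in X_dim.
  assert (Htri : edist x0 c <= edist x0 y + edist y c).
  { apply edist_triangle; [rewrite (X_dim x0 x0_in_X) | rewrite (X_dim c Hc)]; auto. }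
  rewrite (edist_sym x0 y) in Htri.
  apply (pcn_within_gap X r); [exact X_gap | exact s_pcn | exists x0, c; auto | lra].
Qed.

Lemma retract_edge (a b : point) :
  vr_edge s (y :: X) a b ->
  clos_refl_trans point (vr_edge s X) (retract a) (retract b).
Proof.
  intros [Ha [Hb Hab]]; unfold retract.
  destruct (list_eq_dec Req_dec_T a y) as [->|Hay];
    destruct (list_eq_dec Req_dec_T b y) as [->|Hby].
  - apply rt_refl.
  - destruct Hb as [|Hb]; [congruence|].
    apply rt_step; repeat split; auto; now apply near_y_near_x0.
  - destruct Ha as [|Ha]; [congruence|].
    apply rt_step; repeat split; auto.
    rewrite edist_sym; apply near_y_near_x0; [exact Ha|]; now rewrite edist_sym.
  - destruct Ha as [|Ha]; [congruence|]; destruct Hb as [|Hb]; [congruence|].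
    apply rt_step; repeat split; auto.
Qed.

Lemma vr_comp_retract (z w : point) :
  In z X -> In w X -> vr_comp s (y :: X) z w -> vr_comp s X z w.
Proof.
  intros Hz Hw [_ Hzw]; split; [exact Hw|].
  rewrite <- (retract_id z Hz), <- (retract_id w Hw).
  exact (clos_rt_map _ _ _ _ retract retract_edge z w Hzw).
Qed.

End Retraction.

Theorem corollary14 (n : nat) (X : list point) (y x0 : point) (r : R)
  (x : point) (s t : R) :
  finite_set_in n X -> (2 <= length X)%nat ->
  length y = n -> ~ In y X ->
  In x0 X -> 0 < r -> edist y x0 < r -> gap_bound X r ->
  In x X ->
  is_pcn X s -> is_pcn X t -> s <= t ->
  (exists s1, is_s1 X s1 /\ s1 <= s) ->
  same_set (vr_comp s (y :: X) x) (vr_comp t (y :: X) x) ->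
  vr_comp s (y :: X) x y ->
  same_set (vr_comp s X x) (vr_comp t X x).
Proof.
  intros [_ Hdim] _ Hy HyX Hx0 _ Hyx0 Hgap Hx Hs _ Hst _ Hlayer _ w; split.
  - apply vr_comp_mono; [exact Hst | apply incl_refl].
  - intros Hw.
    (* w ∈ [x]_{t,X} ⊆ [x]_{t,Y} = [x]_{s,Y}, and the retraction returns to X. *)
    assert (HwY : vr_comp s (y :: X) x w).
    { apply Hlayer, (vr_comp_mono t t X); [lra | apply incl_tl, incl_refl | exact Hw]. }
    apply (vr_comp_retract n X y x0 r); auto.
    exact (proj1 Hw).
Qed.
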